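(* Let $v\equiv 1$ or $7\pmod{24}$ and $n=\frac{v-1}{6}$. If a cyclic four-fold triple system CTS$(v,4)$ has fine structure $(c_1,c_2,c_3,c_4)$ with $c_2=t$, $c_3=s$, $c_4=u$, then $0\le u\le n$, $0\le s\le n-u$ and $0\le t\le 2n-2u-2s$.
   Context: A cyclic $\lambda$-fold triple system CTS$(v,\lambda)$ is a multiset $\mathcal B$ of 3-element subsets (blocks) of $\mathbb Z_v$ such that every 2-element subset of $\mathbb Z_v$ is contained in exactly $\lambda$ blocks (counted with multiplicity), and $\mathcal B$ is invariant under the translation $x\mapsto x+1$. Thus $\mathcal B$ is a union of translation orbits of 3-subsets with multiplicities; a base block is an orbit representative. The fine structure is $(c_1,\ldots,c_\lambda)$, where $c_i$ is the number of distinct base blocks (orbits) occurring with multiplicity exactly $i$. *)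

From mathcomp Require Import all_boot.
Set Implicit Arguments. Unset Strict Implicit. Unset Printing Implicit Defensive.

(* Points are 'I_v, viewed as Z_v (addition mod v); translation x |-> x+1 is ordS. *)
(* A multiset of 3-subsets is given by its multiplicity function m. *)

Definition translate (v : nat) (B : {set 'I_v}) : {set 'I_v} := [set ordS x | x in B].

Definition tr_orbit (v : nat) (B : {set 'I_v}) : {set {set 'I_v}} :=
  [set iter k (@translate v) B | k : 'I_v].

Definition is_CTS (v lambda : nat) (m : {set 'I_v} -> nat) : Prop :=
  [/\ (forall B, 0 < m B -> #|B| = 3),
      (forall B, m (translate B) = m B) &
      (forall P : {set 'I_v}, #|P| = 2 ->
         \sum_(B : {set 'I_v} | P \subset B) m B = lambda)].

Definition fine_c (v : nat) (m : {set 'I_v} -> nat) (i : nat) : nat :=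
  #|[set tr_orbit B | B in [set B : {set 'I_v} | (#|B| == 3) && (m B == i)]]|.
Arguments is_CTS v lambda m : clear implicits.
Arguments fine_c v m i : clear implicits.

From mathcomp Require Import all_boot.
From mathcomp Require Import zify.
Set Implicit Arguments. Unset Strict Implicit. Unset Printing Implicit Defensive.

(* Every translation orbit of a 3-subset of Z_v has exactly v blocks, because v
   is prime to 2 and 3, so the c_i orbits of multiplicity i account for v c_i
   blocks. Give each block of multiplicity 2 weight 2 and each block of
   multiplicity 3 or 4 weight 4: the blocks through a fixed pair then weigh at
   most lambda = 4 in total. Counting weighted (pair, block) incidences gives
   3 v (2 c_2 + 4 c_3 + 4 c_4) <= 4 C(v, 2) = 12 v n, i.e.
   c_2 + 2 c_3 + 2 c_4 <= 2 n, from which the three bounds follow. *)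

Section Translation.
Variable v : nat.
Local Notation T := 'I_v.

Definition shift (k : nat) (x : T) : T := iter k (@ordS v) x.

Lemma val_shift k x : val (shift k x) = (x + k) %% v.
Proof.
elim: k => [|k IHk]; first by rewrite addn0 modn_small.
by rewrite /shift iterS /= -/(shift k x) IHk addnS -addn1 modnDml addn1.
Qed.

Lemma shift_inj k : injective (shift k).
Proof. by elim: k => [|k IHk] x y //= /ordS_inj /IHk. Qed.

Lemma iter_translateE k (B : {set T}) : iter k (@translate v) B = shift k @: B.
Proof.
elim: k => [|k IHk]; first by rewrite imset_id.
by rewrite iterS IHk /translate -imset_comp.
Qed.

Lemma card_iter_translate k (B : {set T}) : #|iter k (@translate v) B| = #|B|.
Proof. by rewrite iter_translateE card_imset //; apply: shift_inj. Qed.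

Lemma eq_iter_translate k1 k2 (B : {set T}) : k1 = k2 %[mod v] ->
  iter k1 (@translate v) B = iter k2 (@translate v) B.
Proof.
move=> eq_k; rewrite !iter_translateE; apply: eq_imset => x.
by apply: val_inj; rewrite !val_shift -modnDmr eq_k modnDmr.
Qed.

Lemma tr_orbit_iter j (B : {set T}) : 0 < v ->
  tr_orbit (iter j (@translate v) B) = tr_orbit B.
Proof.
move=> v_gt0; apply/setP => C; apply/imsetP/imsetP => -[k _ ->].
  exists (Ordinal (ltn_pmod (k + j) v_gt0)) => //.
  by rewrite -iterD; apply: eq_iter_translate; rewrite /= modn_mod.
exists (Ordinal (ltn_pmod (k + v * j - j) v_gt0)) => //.
rewrite -iterD; apply: eq_iter_translate => /=.
rewrite modnDml subnK; first by rewrite addnC mulnC modnMDl.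
by rewrite (leq_trans (leq_pmull _ v_gt0)) ?leq_addl.
Qed.

(* A translation fixing C fixes the points x, x + d, ..., x + |C| d of C, which
   are distinct as soon as 1, ..., |C| are prime to v. *)
Lemma translate_aperiodic d (C : {set T}) :
  C != set0 -> (forall k, 0 < k <= #|C| -> coprime k v) -> 0 < d < v ->
  iter d (@translate v) C != C.
Proof.
case/set0Pn=> x Cx small_coprime /andP[d_gt0 d_lt_v]; apply/eqP => dC.
pose f (a : 'I_#|C|.+1) := shift (a * d) x.
have fC a : f a \in C.
  by rewrite -(iter_fix a dC) -iterM iter_translateE; apply: imset_f.
have f_lt (a b : 'I_#|C|.+1) : a < b -> f a != f b.
  move=> lt_ab; apply/negP => /eqP/(congr1 val); rewrite !val_shift => /eqP.
  rewrite eqn_modDl eq_sym eqn_mod_dvd; last by rewrite leq_mul2r ltnW ?orbT.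
  have cop : coprime v (b - a).
    rewrite coprime_sym small_coprime // subn_gt0 lt_ab /= -ltnS.
    exact: leq_ltn_trans (leq_subr _ _) (ltn_ord b).
  rewrite -mulnBl Gauss_dvdr // => /(dvdn_leq d_gt0).
  by rewrite leqNgt d_lt_v.
have f_inj : injective f.
  move=> a b eq_f; case: (ltngtP a b) => [/f_lt|/f_lt|/val_inj] //.
    by rewrite eq_f eqxx.
  by rewrite eq_f eqxx.
have : #|[set f a | a : 'I_#|C|.+1]| <= #|C|.
  by apply/subset_leq_card/subsetP => _ /imsetP[a _ ->].
by rewrite card_imset // card_ord ltnn.
Qed.

Lemma card_tr_orbit (B : {set T}) :
  B != set0 -> (forall k, 0 < k <= #|B| -> coprime k v) -> #|tr_orbit B| = v.
Proof.
move=> B_n0 small_coprime; rewrite card_imset ?card_ord //.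
have iter_lt (j k : 'I_v) : j < k ->
    iter j (@translate v) B != iter k (@translate v) B.
  move=> lt_jk; rewrite -(subnK (ltnW lt_jk)) iterD eq_sym.
  apply: translate_aperiodic; rewrite ?card_iter_translate //.
    by rewrite -card_gt0 card_iter_translate card_gt0.
  by rewrite subn_gt0 lt_jk (leq_ltn_trans (leq_subr _ _)).
move=> j k eq_jk; case: (ltngtP j k) => [/iter_lt|/iter_lt|/val_inj] //.
  by rewrite eq_jk eqxx.
by rewrite eq_jk eqxx.
Qed.

End Translation.

(* Through a pair covered lambda = 4 times there pass at most two blocks of
   multiplicity 2, or one block of multiplicity at least 3, so with these
   weights every pair carries weight at most 4; weight_cap k bounds the total
   weight of blocks whose multiplicities sum to k <= 4. *)
Definition mult_weight (k : nat) : nat :=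
  match k with 2 => 2 | 3 | 4 => 4 | _ => 0 end.

Definition weight_cap (k : nat) : nat :=
  match k with 0 | 1 => 0 | 2 => 2 | _ => 4 end.

Lemma weight_cap_add x y :
  x + y <= 4 -> mult_weight x + weight_cap y <= weight_cap (x + y).
Proof. by case: x => [|[|[|[|[|x]]]]]; case: y => [|[|[|[|[|y]]]]]. Qed.

Lemma sum_mult_weight_le (I : Type) (r : seq I) (P : pred I) (F : I -> nat) :
  \sum_(i <- r | P i) F i = 4 -> \sum_(i <- r | P i) mult_weight (F i) <= 4.
Proof.
move=> sum4; rewrite -[4]/(weight_cap 4) -sum4.
have : \sum_(i <- r | P i) F i <= 4 by rewrite sum4.
elim/big_rec2: _ => // i sum_F sum_w _ IH sum_le.
apply: leq_trans (weight_cap_add sum_le).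
by rewrite leq_add2l IH // (leq_trans (leq_addl _ _) sum_le).
Qed.

Section FineStructure.
Variables (v : nat) (m : {set 'I_v} -> nat).

Definition triples_of_mult (i : nat) : {set {set 'I_v}} :=
  [set B : {set 'I_v} | (#|B| == 3) && (m B == i)].

Lemma fine_c_le i :
  (forall B, m (translate B) = m B) -> (forall k, 0 < k <= 3 -> coprime k v) ->
  v * fine_c v m i <= #|triples_of_mult i|.
Proof.
move=> m_translate small_coprime.
have v_gt0 : 0 < v.
  by have := small_coprime 2 isT; rewrite lt0n; apply: contraTneq => ->.
have m_iter k B : m (iter k (@translate v) B) = m B.
  by elim: k => //= k IHk; rewrite m_translate.
rewrite /fine_c -/(triples_of_mult i) -[X in _ <= X]sum1_card.
rewrite (partition_big_imset (@tr_orbit v)) mulnC -sum_nat_const.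
apply: leq_sum => _ /imsetP[B0 B0i ->].
move: B0i; rewrite inE => /andP[/eqP B0_3 /eqP mB0].
have orbit_v : #|tr_orbit B0| = v.
  apply: card_tr_orbit; first by rewrite -card_gt0 B0_3.
  by rewrite B0_3.
rewrite -{1}orbit_v sum1dep_card.
apply/subset_leq_card/subsetP => _ /imsetP[k _ ->].
by rewrite !inE card_iter_translate m_iter B0_3 mB0 tr_orbit_iter ?eqxx.
Qed.

Definition block_weight (B : {set 'I_v}) : nat :=
  if #|B| == 3 then mult_weight (m B) else 0.

Lemma sum_block_weightE : \sum_(B : {set 'I_v}) block_weight B =
  2 * #|triples_of_mult 2| + 4 * #|triples_of_mult 3| + 4 * #|triples_of_mult 4|.
Proof.
have cardE (A : {set {set 'I_v}}) : #|A| = \sum_B (B \in A : nat).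
  by rewrite -sum1_card big_mkcond; apply: eq_bigr => B _; case: (B \in A).
rewrite !cardE !big_distrr -!big_split /=; apply: eq_bigr => B _.
rewrite /block_weight !inE; case: (#|B| == 3) => //=.
by case: (m B) => [|[|[|[|[|k]]]]].
Qed.

Lemma sum_block_weight_le :
  (forall P : {set 'I_v}, #|P| = 2 ->
     \sum_(B : {set 'I_v} | P \subset B) m B = 4) ->
  3 * \sum_(B : {set 'I_v}) block_weight B <= 4 * 'C(v, 2).
Proof.
move=> pair_mult.
have pairs_in (B : {set 'I_v}) :
    #|[set P : {set 'I_v} | P \subset B & #|P| == 2]| * block_weight B =
    3 * block_weight B.
  by rewrite /block_weight; case: eqP => [B3|_]; rewrite ?muln0 // cards_draws B3.
have double_count : \sum_(B : {set 'I_v}) 3 * block_weight B =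
    \sum_(P : {set 'I_v} | #|P| == 2)
      \sum_(B : {set 'I_v} | P \subset B) block_weight B.
  under eq_bigr do rewrite -pairs_in -sum_nat_const.
  rewrite (exchange_big_dep (fun P : {set 'I_v} => #|P| == 2)) /=.
    by apply: eq_bigr => P P2; apply: eq_bigl => B; rewrite inE P2 andbT.
  by move=> B P _; rewrite inE => /andP[].
rewrite big_distrr /= double_count -[v in 'C(v, 2)]card_ord -card_draws.
rewrite mulnC -sum_nat_const.
rewrite [X in _ <= X](eq_bigl (fun P : {set 'I_v} => #|P| == 2)) => [|P];
  last by rewrite inE.
apply: leq_sum => P /eqP P2; apply: leq_trans (sum_mult_weight_le (pair_mult P P2)).
by apply: leq_sum => B _; rewrite /block_weight; case: ifP.
Qed.

Lemma CTS4_fine_structure_le :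
  is_CTS v 4 m -> (forall k, 0 < k <= 3 -> coprime k v) ->
  3 * (2 * (v * fine_c v m 2) + 4 * (v * fine_c v m 3) + 4 * (v * fine_c v m 4))
    <= 4 * 'C(v, 2).
Proof.
case=> _ m_translate pair_mult small_coprime.
apply: leq_trans (sum_block_weight_le pair_mult).
have fine_le i : v * fine_c v m i <= #|triples_of_mult i| by apply: fine_c_le.
by rewrite sum_block_weightE leq_mul2l !leq_add ?leq_mul2l ?fine_le ?orbT.
Qed.

End FineStructure.

Theorem mainTheorem12 (v : nat) (m : {set 'I_v} -> nat) :
  (v %% 24 = 1 \/ v %% 24 = 7) ->
  is_CTS v 4 m ->
  let n := (v - 1) %/ 6 in
  let t := fine_c v m 2 in
  let s := fine_c v m 3 in
  let u := fine_c v m 4 in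
  [/\ 0 <= u <= n, 0 <= s <= n - u & 0 <= t <= 2 * n - 2 * u - 2 * s].
Proof.
move=> v_mod CTS n t s u.
have [v_def v_mod6] : v = 6 * n + 1 /\ v %% 6 = 1 by rewrite /n; lia.
have small_coprime k : 0 < k <= 3 -> coprime k v.
  move=> /andP[k_gt0 k_le3]; apply: (@coprime_dvdl _ 6).
    by case: k k_gt0 k_le3 => [|[|[|[|k]]]].
  by rewrite coprime_sym /coprime -gcdn_modl v_mod6.
have := CTS4_fine_structure_le CTS small_coprime.
have -> : 'C(v, 2) = 3 * v * n.
  rewrite bin2.
  have -> : v * v.-1 = (3 * v * n).*2 by rewrite -muln2; nia.
  by rewrite doubleK.
rewrite -/t -/s -/u => bound.
have : v * (t + 2 * s + 2 * u) <= v * (2 * n) by lia.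
rewrite leq_pmul2l; last by rewrite v_def addn1.
by split; lia.
Qed.
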